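(* Let $\psi\colon\mathbb R^2\to\mathbb R$ be smooth and $p_\ast\in\mathbb R^2$ be such that conditions 1–7 below hold with $N=2$. Let $\Omega>0$, $\alpha,c>0$, $\varpi\in\mathbb N$, $\mathsf X:=\mathbb R^2\times\mathbb S^1\subset\mathbb R^4$. For $\varepsilon>0$ let $V_\varepsilon([p,o]):=y_\ast-\psi(p)+\varepsilon\langle\nabla\psi(p),o-o_\perp\rangle^2$, and for $a>0$, $w\in\mathbb R$ let $\bar\Sigma^a_{\mathsf X}([p,o],w):=\big((\tfrac{\alpha c}2\langle\nabla\psi(p),o\rangle+a\phi^a([p,o])+w)\,o,\ \Omega o_\perp\big)$ with $\phi^a([p,o]):=\frac1{2\pi}\int_0^{2\pi}\int_0^1(1-s)U(\tau)^2v(\tau)\langle\nabla^2\psi(p+asU(\tau)o)o,o\rangle\,\mathrm ds\,\mathrm d\tau$, $U(\tau):=\alpha\sin(\varpi\tau)$, $v(\tau):=c\sin(\varpi\tau)$. Let $(\bar\Sigma^a_{\mathsf X}V_\varepsilon)(x,w)$ denote the Lie derivative of $V_\varepsilon$ along $x\mapsto\bar\Sigma^a_{\mathsf X}(x,w)$. Then there exists $\varepsilon_2>0$ such that $(\bar\Sigma^a_{\mathsf X}V_\varepsilon)(x,w)\le\big(2a|\phi^a(x)|+2|w|-\varepsilon\Omega|\nabla\psi(p)|\big)|\nabla\psi(p)|$ for every $\varepsilon\in(0,\varepsilon_2)$, every $a>0$, every $w\in\mathbb R$ and every $x=[p,o]\in\mathsf X$.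
   Context: $\mathbb S^1$ is the unit circle in $\mathbb R^2$; for $o\in\mathbb S^1$, $o_\perp\in\mathbb S^1$ is the unique element with $(o,o_\perp)$ a positively oriented orthonormal basis of $\mathbb R^2$. Notation: $y_\ast:=\psi(p_\ast)$, $\underline y:=\inf\psi\in\mathbb R\cup\{-\infty\}$, $|\nabla^2\psi(p)|$ operator norm, $\psi^{-1}(\ge y):=\{p:\psi(p)\ge y\}$. Conditions: (1) $\psi(p)<y_\ast$ for $p\ne p_\ast$; (2) $\nabla^2\psi(p_\ast)$ negative definite; (3) there is $r_1>0$ with $\psi(p_\ast+v)=\psi(p_\ast-v)$ for $|v|\le r_1$; (4) there is $c_1>0$ with $|\nabla^2\psi(p)|\le c_1$ for all $p$; (5) $\nabla\psi(p)\ne0$ for $p\ne p_\ast$; (6) for every $y\in(\underline y,y_\ast)$, $\psi^{-1}(\ge y)$ is compact; (7) there are $c_2,r_2,r_3>0$ with $|\nabla^2\psi(p+v)|\le c_2|\nabla\psi(p)|$ for all $|p-p_\ast|\ge r_2$, $|v|\le r_3$. *)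

From Stdlib Require Import Reals List.
From Coquelicot Require Import Coquelicot.
Open Scope R_scope.

Definition dot (u v : R * R) : R := fst u * fst v + snd u * snd v.
Definition vnorm (u : R * R) : R := sqrt (dot u u).
Definition vadd (u v : R * R) : R * R := (fst u + fst v, snd u + snd v).
Definition vsub (u v : R * R) : R * R := (fst u - fst v, snd u - snd v).
Definition vscal (k : R) (u : R * R) : R * R := (k * fst u, k * snd u).

(* o_perp: the unique unit vector with (o, o_perp) positively oriented
   orthonormal; for o = (o1,o2) in S^1 this is (-o2, o1). *)
Definition perp (o : R * R) : R * R := (- snd o, fst o).
Definition in_S1 (o : R * R) : Prop := fst o ^ 2 + snd o ^ 2 = 1.

Definition d1 (f : R * R -> R) : R * R -> R :=
  fun p => Derive (fun t => f (t, snd p)) (fst p).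
Definition d2 (f : R * R -> R) : R * R -> R :=
  fun p => Derive (fun t => f (fst p, t)) (snd p).

Fixpoint Ck (k : nat) (f : R * R -> R) : Prop :=
  match k with
  | O => forall p, continuous f p
  | S k' => (forall p, continuous f p) /\
            (forall p, ex_derive (fun t => f (t, snd p)) (fst p) /\
                       ex_derive (fun t => f (fst p, t)) (snd p)) /\
            Ck k' (d1 f) /\ Ck k' (d2 f)
  end.
Definition smooth (f : R * R -> R) : Prop := forall k, Ck k f.

Definition grad (f : R * R -> R) (p : R * R) : R * R := (d1 f p, d2 f p).

Definition hess (f : R * R -> R) (p : R * R) (v : R * R) : R * R :=
  (d1 (d1 f) p * fst v + d2 (d1 f) p * snd v,
   d1 (d2 f) p * fst v + d2 (d2 f) p * snd v).

(* "operator norm of the linear map A is <= c", i.e.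
   sup_{|v| <= 1} |A v| <= c (literal unfolding of sup <= c). *)
Definition opnorm_le (A : R * R -> R * R) (c : R) : Prop :=
  forall v, vnorm v <= 1 -> vnorm (A v) <= c.

Definition neg_definite (A : R * R -> R * R) : Prop :=
  forall v, v <> (0, 0) -> dot (A v) v < 0.

Definition compact2 (K : R * R -> Prop) : Prop :=
  forall (I : Type) (U : I -> R * R -> Prop),
    (forall i, open (U i)) ->
    (forall x, K x -> exists i, U i x) ->
    exists l : list I, forall x, K x -> exists i, In i l /\ U i x.

Definition inf_psi (psi : R * R -> R) : Rbar :=
  Glb_Rbar (fun z => exists p, z = psi p).

Definition conditions (psi : R * R -> R) (pst : R * R) : Prop :=
  (forall p, p <> pst -> psi p < psi pst) /\
  neg_definite (hess psi pst) /\
  (exists r1, 0 < r1 /\ forall v, vnorm v <= r1 ->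
      psi (vadd pst v) = psi (vsub pst v)) /\
  (exists c1, 0 < c1 /\ forall p, opnorm_le (hess psi p) c1) /\
  (forall p, p <> pst -> grad psi p <> (0, 0)) /\
  (forall y, Rbar_lt (inf_psi psi) y -> y < psi pst ->
      compact2 (fun p => psi p >= y)) /\
  (exists c2 r2 r3, 0 < c2 /\ 0 < r2 /\ 0 < r3 /\
     forall p v, vnorm (vsub p pst) >= r2 -> vnorm v <= r3 ->
       opnorm_le (hess psi (vadd p v)) (c2 * vnorm (grad psi p))).

Definition phi (psi : R * R -> R) (alpha c : R) (varpi : nat) (a : R)
    (p o : R * R) : R :=
  let U := fun tau => alpha * sin (INR varpi * tau) in
  let v := fun tau => c * sin (INR varpi * tau) in
  / (2 * PI) *
  RInt (fun tau =>
    RInt (fun s =>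
      (1 - s) * (U tau) ^ 2 * v tau *
      dot (hess psi (vadd p (vscal (a * s * U tau) o)) o) o) 0 1)
    0 (2 * PI).

(* V_eps, extended to all of R^2 x R^2 (o_perp extended linearly). *)
Definition Veps (psi : R * R -> R) (yst eps : R) (x : (R * R) * (R * R)) : R :=
  let (p, o) := x in
  yst - psi p + eps * (dot (grad psi p) (vsub o (perp o))) ^ 2.

Definition Sigma (psi : R * R -> R) (Om alpha c : R) (varpi : nat) (a w : R)
    (x : (R * R) * (R * R)) : (R * R) * (R * R) :=
  let (p, o) := x in
  (vscal (alpha * c / 2 * dot (grad psi p) o + a * phi psi alpha c varpi a p o + w) o,
   vscal Om (perp o)).

Definition lie (F : (R * R) * (R * R) -> R)
    (X : (R * R) * (R * R) -> (R * R) * (R * R)) (x : (R * R) * (R * R)) : R :=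
  let (p, o) := x in
  let (dp, do_) := X x in
  Derive (fun t => F (vadd p (vscal t dp), vadd o (vscal t do_))) 0.

From Stdlib Require Import Reals Lra Psatz.
From Coquelicot Require Import Coquelicot.
Open Scope R_scope.

(* Only the global Hessian bound |hess psi| <= c1 of condition (4) is needed.
   Along the field, the position moves with speed lam = (alpha c / 2) <grad psi, o> + a phi + w
   in direction o while o rotates with angular speed Om, so
     d/dt V_eps = - lam <grad psi, o>
                  + 2 eps <grad psi, o - o_perp> (lam <hess psi o, o - o_perp> + Om <grad psi, o + o_perp>).
   With X = <grad psi, o> and Z = <grad psi, o_perp>, so that X^2 + Z^2 = |grad psi|^2, the rotation
   term is 2 eps Om (X^2 - Z^2) = 2 eps Om (2 X^2 - |grad psi|^2): it produces the decay
   - eps Om |grad psi|^2, and the dissipative term - (alpha c / 2) X^2 absorbs every other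
   contribution quadratic in X or |grad psi| once eps is small against 1 / c1, alpha c / Om and
   Om / (c1^2 alpha c). *)

Lemma dot_self_ge0 u : 0 <= dot u u.
Proof. destruct u as [u1 u2]; unfold dot; simpl; nra. Qed.

Lemma vnorm_ge0 u : 0 <= vnorm u.
Proof. apply sqrt_pos. Qed.

Lemma vnorm_sqr u : vnorm u * vnorm u = dot u u.
Proof. apply sqrt_sqrt, dot_self_ge0. Qed.

Lemma dot_sqr_le u v : dot u v * dot u v <= dot u u * dot v v.
Proof.
  destruct u as [u1 u2], v as [v1 v2]; unfold dot; simpl.
  pose proof (Rle_0_sqr (u1 * v2 - u2 * v1)); unfold Rsqr in *; nra.
Qed.

Lemma dot_vaddr u v w : dot u (vadd v w) = dot u v + dot u w.
Proof. unfold dot, vadd; simpl; ring. Qed.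

Lemma dot_vsubr u v w : dot u (vsub v w) = dot u v - dot u w.
Proof. unfold dot, vsub; simpl; ring. Qed.

Lemma dot_sqr_add_perp g o :
  dot g o * dot g o + dot g (perp o) * dot g (perp o) = dot g g * dot o o.
Proof. unfold dot, perp; simpl; ring. Qed.

Lemma dot_sub_perp_self o :
  dot (vsub o (perp o)) (vsub o (perp o)) = 2 * dot o o.
Proof. unfold dot, vsub, perp; simpl; ring. Qed.

Lemma in_S1_dot o : in_S1 o -> dot o o = 1.
Proof. unfold in_S1, dot; intros Ho; rewrite <- Ho; ring. Qed.

Lemma vadd_vscal0 p w : vadd p (vscal 0 w) = p.
Proof. destruct p; unfold vadd, vscal; simpl; f_equal; ring. Qed.

Lemma vsub_perp_rotation o Om t :
  let ot := vadd o (vscal t (vscal Om (perp o))) in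
  vsub ot (perp ot) = vadd (vsub o (perp o)) (vscal t (vscal Om (vadd o (perp o)))).
Proof. destruct o; unfold vadd, vsub, vscal, perp; simpl; f_equal; ring. Qed.

Lemma opnorm_le_dot A c o :
  opnorm_le A c -> dot o o = 1 -> dot (A o) (A o) <= c * c.
Proof.
  intros HA Ho.
  assert (Hle : vnorm (A o) <= c).
  { apply HA; unfold vnorm; rewrite Ho, sqrt_1; lra. }
  rewrite <- vnorm_sqr.
  pose proof (vnorm_ge0 (A o)).
  apply Rmult_le_compat; lra.
Qed.

Lemma vnorm_sqr_perp g o : in_S1 o ->
  vnorm g * vnorm g = dot g o * dot g o + dot g (perp o) * dot g (perp o).
Proof. intros Ho; rewrite vnorm_sqr, dot_sqr_add_perp, (in_S1_dot o Ho); ring. Qed.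

Lemma opnorm_le_dot_sub_perp A c o : opnorm_le A c -> in_S1 o ->
  dot (A o) (vsub o (perp o)) * dot (A o) (vsub o (perp o)) <= 2 * (c * c).
Proof.
  intros HA Ho; apply in_S1_dot in Ho.
  eapply Rle_trans; [apply dot_sqr_le|].
  rewrite dot_sub_perp_self, Ho.
  pose proof (opnorm_le_dot A c o HA Ho); lra.
Qed.

Lemma Rabs_le_of_sqr_le a b : 0 <= b -> a * a <= b * b -> Rabs a <= b.
Proof.
  intros Hb Hab; rewrite <- (Rabs_pos_eq b Hb).
  apply Rsqr_le_abs_0; exact Hab.
Qed.

Lemma neg_semidef_quadratic a b c u N : 0 < a -> b * b <= 4 * a * c ->
  - a * (u * u) + b * u * N - c * (N * N) <= 0.
Proof.
  intros Ha Hb.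
  assert (E : 4 * a * (- a * (u * u) + b * u * N - c * (N * N))
             = - ((2 * a * u - b * N) * (2 * a * u - b * N)) - (4 * a * c - b * b) * (N * N))
    by ring.
  assert (0 <= (2 * a * u - b * N) * (2 * a * u - b * N)) by apply Rle_0_sqr.
  assert (0 <= (4 * a * c - b * b) * (N * N)) by (apply Rmult_le_pos; [lra | apply Rle_0_sqr]).
  nra.
Qed.

Lemma Veps_flow_estimate X Z Hv N lam k m M Om c1 eps :
  0 <= N -> N * N = X * X + Z * Z -> 0 <= c1 -> Hv * Hv <= 2 * (c1 * c1) ->
  0 < k -> lam = k * X + m -> Rabs m <= M -> 0 < eps ->
  4 * eps * c1 <= 1 -> 8 * eps * Om <= k -> 8 * eps * (c1 * c1) * k <= Om ->
  - lam * X + 2 * eps * (X - Z) * (lam * Hv + Om * (X + Z))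
  <= (2 * M - eps * Om * N) * N.
Proof.
  intros HN0 HN Hc1 HHv Hk -> Hm Heps Hc1eps HOm Hc1k.
  assert (HM0 : 0 <= M) by (pose proof (Rabs_pos m); lra).
  set (u := Rabs X).
  assert (HXu : X * X = u * u) by (unfold u; rewrite <- Rabs_mult, Rabs_pos_eq; nra).
  assert (Hu0 : 0 <= u) by apply Rabs_pos.
  assert (HuN : u <= N) by (apply Rabs_le_of_sqr_le; nra).
  assert (HYHv : Rabs ((X - Z) * Hv) <= 2 * c1 * N).
  { apply Rabs_le_of_sqr_le; [nra|].
    assert (HY : (X - Z) * (X - Z) <= 2 * (N * N)) by (pose proof (Rle_0_sqr (X + Z)); unfold Rsqr in *; nra).
    replace ((X - Z) * Hv * ((X - Z) * Hv)) with (((X - Z) * (X - Z)) * (Hv * Hv)) by ring.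
    replace (2 * c1 * N * (2 * c1 * N)) with ((2 * (N * N)) * (2 * (c1 * c1))) by ring.
    apply Rmult_le_compat; [apply Rle_0_sqr | apply Rle_0_sqr | exact HY | exact HHv]. }
  assert (HmX : - (m * X) <= M * N).
  { assert (Rabs m * u <= M * N) by (apply Rmult_le_compat; auto using Rabs_pos).
    pose proof (Rle_abs (- (m * X))) as Habs.
    rewrite Rabs_Ropp, Rabs_mult in Habs; fold u in Habs; lra. }
  assert (Hlam : (k * X + m) * ((X - Z) * Hv) <= (k * u + M) * (2 * c1 * N)).
  { eapply Rle_trans; [apply Rle_abs|]; rewrite Rabs_mult.
    apply Rmult_le_compat; auto using Rabs_pos.
    eapply Rle_trans; [apply Rabs_triang|].
    rewrite Rabs_mult, (Rabs_pos_eq k) by lra; fold u; lra. }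
  assert (Hquad := neg_semidef_quadratic (k / 2) (4 * eps * c1 * k) (eps * Om) u N).
  assert (Hdisc : (4 * eps * c1 * k) * (4 * eps * c1 * k) <= 4 * (k / 2) * (eps * Om)).
  { assert (0 <= 2 * k * eps) by (apply Rmult_le_pos; lra).
    replace ((4 * eps * c1 * k) * (4 * eps * c1 * k)) with (2 * k * eps * (8 * eps * (c1 * c1) * k)) by ring.
    replace (4 * (k / 2) * (eps * Om)) with (2 * k * eps * Om) by field.
    apply Rmult_le_compat_l; assumption. }
  specialize (Hquad ltac:(lra) Hdisc).
  assert (Heps2 : 0 <= 2 * eps) by lra.
  assert (H1 := Rmult_le_compat_l _ _ _ Heps2 Hlam).
  assert (H2 : 0 <= (1 - 4 * eps * c1) * (M * N)) by (apply Rmult_le_pos; nra).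
  assert (H3 : 0 <= (k / 2 - 4 * eps * Om) * (u * u)) by (apply Rmult_le_pos; nra).
  replace (- (k * X + m) * X + 2 * eps * (X - Z) * ((k * X + m) * Hv + Om * (X + Z)))
    with (- k * (u * u) - m * X + 2 * eps * ((k * X + m) * ((X - Z) * Hv))
          + 2 * eps * Om * (2 * (u * u) - N * N)) by (rewrite <- HXu, HN; ring).
  nra.
Qed.

Lemma continuous_continuity_2d_pt (f : R * R -> R) x y :
  continuous f (x, y) -> continuity_2d_pt (fun u v => f (u, v)) x y.
Proof.
  intros H; apply continuity_2d_pt_filterlim.
  eapply filterlim_ext; [|exact H].
  intros [u v]; reflexivity.
Qed.

Lemma Ck_S k : forall f, Ck (S k) f -> Ck k f.
Proof.
  induction k as [|k IH]; intros f Hf.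
  - exact (proj1 Hf).
  - destruct Hf as [Hc [Hd [H1 H2]]].
    exact (conj Hc (conj Hd (conj (IH _ H1) (IH _ H2)))).
Qed.

Lemma Ck_ex_diff_n k : forall f : R * R -> R, Ck k f ->
  forall x y, ex_diff_n (fun u v => f (u, v)) k x y.
Proof.
  induction k as [|k IH]; intros f Hf x y.
  - split; [apply continuous_continuity_2d_pt, Hf | exact I].
  - destruct Hf as [Hc [Hd [H1 H2]]].
    split; [apply continuous_continuity_2d_pt, Hc|].
    repeat split; [apply (Hd (x, y)) | apply (Hd (x, y)) | apply (IH _ H1) | apply (IH _ H2)].
Qed.

Lemma differentiable_pt_lim_quadratic_remainder f x y lx ly D :
  locally_2d (fun u v =>
    Rabs (f u v - f x y - (lx * (u - x) + ly * (v - y)))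
      <= D * Rmax (Rabs (u - x)) (Rabs (v - y)) ^ 2) x y ->
  differentiable_pt_lim f x y lx ly.
Proof.
  intros [d Hd] eps.
  assert (HD : 0 < Rabs D + 1) by (pose proof (Rabs_pos D); lra).
  exists (mkposreal _ (Rmin_pos _ _ (cond_pos d)
                         (Rdiv_lt_0_compat _ _ (cond_pos eps) HD))).
  intros u v Hu Hv; simpl in Hu, Hv.
  eapply Rle_trans;
    [apply Hd; eapply Rlt_le_trans; eauto; apply Rmin_l|].
  set (M := Rmax (Rabs (u - x)) (Rabs (v - y))).
  assert (HM0 : 0 <= M) by (eapply Rle_trans; [apply Rabs_pos | apply Rmax_l]).
  assert (HM : M * (Rabs D + 1) <= eps).
  { apply Rlt_le, (Rmult_lt_reg_r (/ (Rabs D + 1))); [apply Rinv_0_lt_compat; lra|].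
    rewrite Rmult_assoc, Rinv_r, Rmult_1_r by lra.
    apply Rmax_lub_lt; eapply Rlt_le_trans; eauto; apply Rmin_r. }
  pose proof (Rle_abs D).
  simpl; nra.
Qed.

Lemma Ck2_differentiable_pt_lim (f : R * R -> R) : Ck 2 f -> forall x y,
  differentiable_pt_lim (fun u v => f (u, v)) x y (d1 f (x, y)) (d2 f (x, y)).
Proof.
  intros Hf x y.
  destruct (Taylor_Lagrange_2d (fun u v => f (u, v)) 1 x y) as [D HD].
  { exists (mkposreal 1 Rlt_0_1); intros; apply (Ck_ex_diff_n 2 f Hf). }
  apply differentiable_pt_lim_quadratic_remainder with D.
  destruct HD as [d Hd]; exists d; intros u v Hu Hv.
  specialize (Hd u v Hu Hv).
  unfold DL_pol, differential, partial_derive, Binomial.C in Hd; simpl in Hd.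
  unfold d1, d2; simpl.
  match goal with |- Rabs ?a <= _ => match type of Hd with Rabs ?b <= _ =>
    replace a with b by (field; lra) end end.
  exact Hd.
Qed.

Lemma is_derive_line (f : R * R -> R) p w : Ck 2 f ->
  is_derive (fun t => f (vadd p (vscal t w))) 0 (dot (grad f p) w).
Proof.
  intros Hf; destruct p as [p1 p2], w as [w1 w2].
  apply is_derive_Reals; unfold vadd, vscal, dot, grad; simpl.
  assert (Hline : forall q l, derivable_pt_lim (fun t => q + t * l) 0 l).
  { intros q l; apply is_derive_Reals; auto_derive; auto; ring. }
  pose proof (derivable_pt_lim_comp_2d (fun u v => f (u, v))
    (fun t => p1 + t * w1) (fun t => p2 + t * w2) 0
    (d1 f (p1, p2)) (d2 f (p1, p2)) w1 w2) as Hcomp.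
  cbv beta in Hcomp; rewrite !Rmult_0_l, !Rplus_0_r in Hcomp.
  exact (Hcomp (Ck2_differentiable_pt_lim f Hf p1 p2) (Hline _ _) (Hline _ _)).
Qed.

Lemma is_derive_dot_grad_line psi p dp q dq : Ck 3 psi ->
  is_derive (fun t => dot (grad psi (vadd p (vscal t dp))) (vadd q (vscal t dq))) 0
    (dot (hess psi p dp) q + dot (grad psi p) dq).
Proof.
  intros [_ [_ [H1 H2]]].
  destruct q as [q1 q2], dq as [dq1 dq2].
  unfold dot at 1; unfold grad, vadd at 2, vscal at 2; simpl.
  assert (Hlin : forall q l, is_derive (fun t => q + t * l) 0 l).
  { intros q l; auto_derive; auto; ring. }
  pose proof (is_derive_plus _ _ _ _ _
    (is_derive_mult _ _ _ _ _ (is_derive_line _ p dp H1) (Hlin q1 dq1) Rmult_comm)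
    (is_derive_mult _ _ _ _ _ (is_derive_line _ p dp H2) (Hlin q2 dq2) Rmult_comm)) as K.
  refine (eq_ind _ (fun l => is_derive _ 0 l) K _ _).
  rewrite vadd_vscal0; unfold hess, dot, grad, plus, mult; simpl; ring.
Qed.

Lemma Derive_Veps_flow psi yst eps lam Om p o : Ck 3 psi ->
  Derive (fun t => Veps psi yst eps
            (vadd p (vscal t (vscal lam o)), vadd o (vscal t (vscal Om (perp o))))) 0
  = - lam * dot (grad psi p) o
    + 2 * eps * dot (grad psi p) (vsub o (perp o))
      * (lam * dot (hess psi p o) (vsub o (perp o)) + Om * dot (grad psi p) (vadd o (perp o))).
Proof.
  intros H3.
  pose proof (is_derive_line psi p (vscal lam o) (Ck_S 2 psi H3)) as Hpsi.
  pose proof (is_derive_dot_grad_line psi p (vscal lam o) (vsub o (perp o))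
                (vscal Om (vadd o (perp o))) H3) as Hg.
  pose proof (is_derive_plus _ _ _ _ _ (is_derive_minus _ _ _ _ _ (is_derive_const yst 0) Hpsi)
                (is_derive_scal _ _ eps _ (is_derive_pow _ 2 _ _ Hg))) as K.
  apply is_derive_unique.
  refine (eq_ind _ (fun l => is_derive _ 0 l) (is_derive_ext _ _ _ _ _ K) _ _).
  - intros t; unfold Veps; rewrite vsub_perp_rotation; reflexivity.
  - rewrite !vadd_vscal0; unfold hess, dot, grad, vscal, minus, plus, opp, zero; simpl; ring.
Qed.

Lemma small_eps_exists c1 k Om : 0 < c1 -> 0 < k -> 0 < Om ->
  exists eps2, 0 < eps2 /\ forall eps, eps < eps2 ->
    4 * eps * c1 <= 1 /\ 8 * eps * Om <= k /\ 8 * eps * (c1 * c1) * k <= Om.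
Proof.
  intros Hc1 Hk HOm.
  assert (Hc1k : 0 < 8 * (c1 * c1) * k) by (repeat apply Rmult_lt_0_compat; lra).
  exists (Rmin (1 / (4 * c1)) (Rmin (k / (8 * Om)) (Om / (8 * (c1 * c1) * k)))).
  split; [repeat apply Rmin_pos; apply Rdiv_lt_0_compat; lra|].
  intros eps Heps.
  pose proof (Rlt_le_trans _ _ _ Heps (Rmin_l _ _)) as H1.
  pose proof (Rlt_le_trans _ _ _ Heps (Rmin_r _ _)) as H23.
  pose proof (Rlt_le_trans _ _ _ H23 (Rmin_l _ _)) as H2.
  pose proof (Rlt_le_trans _ _ _ H23 (Rmin_r _ _)) as H3.
  apply Rlt_div_r in H1, H2, H3; lra.
Qed.

Theorem lemma2 (psi : R * R -> R) (pst : R * R)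
  (Om alpha c : R) (varpi : nat) :
  smooth psi -> conditions psi pst ->
  0 < Om -> 0 < alpha -> 0 < c ->
  exists eps2, 0 < eps2 /\
    forall eps a w p o, 0 < eps -> eps < eps2 -> 0 < a -> in_S1 o ->
      lie (Veps psi (psi pst) eps) (Sigma psi Om alpha c varpi a w) (p, o)
      <= (2 * a * Rabs (phi psi alpha c varpi a p o) + 2 * Rabs w
          - eps * Om * vnorm (grad psi p)) * vnorm (grad psi p).
Proof.
  intros Hpsi [_ [_ [_ [[c1 [Hc1 Hhess]] _]]]] HOm Halpha Hc.
  assert (Hk : 0 < alpha * c / 2) by (apply Rdiv_lt_0_compat; nra).
  destruct (small_eps_exists c1 (alpha * c / 2) Om Hc1 Hk HOm) as [eps2 [Heps2 Hsmall]].
  exists eps2; split; [exact Heps2|].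
  intros eps a w p o Heps Hlt Ha Ho.
  destruct (Hsmall eps Hlt) as [Hs1 [Hs2 Hs3]].
  set (phi_a := phi psi alpha c varpi a p o).
  assert (Hm : Rabs (a * phi_a + w) <= a * Rabs phi_a + Rabs w).
  { eapply Rle_trans; [apply Rabs_triang|].
    rewrite Rabs_mult, (Rabs_pos_eq a) by lra; lra. }
  unfold lie, Sigma; rewrite Derive_Veps_flow by apply Hpsi.
  rewrite (dot_vsubr (grad psi p)), (dot_vaddr (grad psi p)).
  eapply Rle_trans.
  - eapply (Veps_flow_estimate _ _ _ (vnorm (grad psi p)) _ (alpha * c / 2) (a * phi_a + w)
             (a * Rabs phi_a + Rabs w) Om c1);
      [apply vnorm_ge0 | apply vnorm_sqr_perp, Ho | lra
      | apply opnorm_le_dot_sub_perp; [apply Hhess | exact Ho]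
      | exact Hk | unfold phi_a; ring | exact Hm | exact Heps | exact Hs1 | exact Hs2 | exact Hs3].
  - right; ring.
Qed.
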